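(* Let $N\ge 2$ and $d\ge 1$ be integers and let $f:\mathbb{Z}_N^d\to\mathbb{C}$ be a nonzero function with support $E=\mathrm{supp}(f)$ and Fourier support $\Sigma=\mathrm{supp}(\hat f)$. Then \[ N^d\le |E|\left(\Lambda_2(\Sigma)-|\Sigma|^2\left(1-\frac{N^d}{|E||\Sigma|}\right)-|\Sigma|(|\Sigma|-1)\left(1-\sqrt{\frac{N^d}{|E||\Sigma|}}\sqrt{\frac{\Lambda_2(E)}{|E|^3}}\right)\right)^{1/3} \] and \[ N^d\le |\Sigma|\left(\Lambda_2(E)-|E|^2\left(1-\frac{N^d}{|E||\Sigma|}\right)-|E|(|E|-1)\left(1-\sqrt{\frac{N^d}{|E||\Sigma|}}\sqrt{\frac{\Lambda_2(\Sigma)}{|\Sigma|^3}}\right)\right)^{1/3}. \]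
   Context: $\mathbb{Z}_N=\mathbb{Z}/N\mathbb{Z}$. The discrete Fourier transform of $f:\mathbb{Z}_N^d\to\mathbb{C}$ is $\hat f(m)=N^{-d/2}\sum_{x\in\mathbb{Z}_N^d}f(x)e^{-2\pi i\, m\cdot x/N}$ for $m\in\mathbb{Z}_N^d$. The support of a function is the set of points where it is nonzero. For $A\subseteq\mathbb{Z}_N^d$, the additive energy is $\Lambda_2(A)=\#\{(x_1,x_2,x_3,x_4)\in A^4: x_1+x_2=x_3+x_4\}$. *)

From HB Require Import structures.
From mathcomp Require Import all_boot all_order all_algebra.
From mathcomp Require Import reals exp trigo.
From mathcomp Require Import complex.
Set Implicit Arguments. Unset Strict Implicit. Unset Printing Implicit Defensive.
Import Order.TTheory GRing.Theory Num.Theory.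
Local Open Scope ring_scope.

(* Z_N^d is represented by row vectors 'rV['Z_N]_d (faithful for N >= 2). *)

(* the dot product m . x, computed on representatives in {0,..,N-1} *)
Definition dotZ (N d : nat) (m x : 'rV['Z_N]_d) : nat :=
  (\sum_(i < d) (m ord0 i : nat) * (x ord0 i : nat))%N.

Definition expi (R : realType) (t : R) : R[i] := (cos t +i* sin t)%C.

Definition dft (R : realType) (N d : nat) (f : 'rV['Z_N]_d -> R[i])
  (m : 'rV['Z_N]_d) : R[i] :=
  (((Num.sqrt (N%:R : R)) ^- d)%:C)%C *
  \sum_(x : 'rV['Z_N]_d)
     f x * expi (- (2 * pi * (dotZ m x)%:R / N%:R)).

Definition supp (R : realType) (N d : nat) (f : 'rV['Z_N]_d -> R[i])
  : {set 'rV['Z_N]_d} := [set x | f x != 0].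

Definition energy (N d : nat) (A : {set 'rV['Z_N]_d}) : nat :=
  #|[set p : ('rV['Z_N]_d * 'rV['Z_N]_d) * ('rV['Z_N]_d * 'rV['Z_N]_d) |
     [&& p.1.1 \in A, p.1.2 \in A, p.2.1 \in A, p.2.2 \in A &
         p.1.1 + p.1.2 == p.2.1 + p.2.2]]|.

(* real cube root x^{1/3} (odd, defined on all of R) *)
Definition cbrt (R : realType) (x : R) : R :=
  if 0 <= x then powR x (3%:R^-1) else - powR (- x) (3%:R^-1).

From HB Require Import structures.
From mathcomp Require Import all_boot all_order all_algebra.
From mathcomp Require Import reals exp trigo.
From mathcomp Require Import complex.
From mathcomp Require Import ring lra.
Set Implicit Arguments. Unset Strict Implicit. Unset Printing Implicit Defensive.
Import Order.TTheory GRing.Theory Num.Theory.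
Local Open Scope ring_scope.

(* Let n = N^d, P = sum |f|^2 = sum |f^|^2, F = sum |f|^4 and T = sum |f^|^4.
   Expanding |f|^4 through the inversion formula, orthogonality of the
   characters gives n F = sum of f^(a) f^(b) conj(f^(c)) conj(f^(e)) over the
   additive quadruples a + b = c + e of Sigma.  The trivial quadruples
   ({c, e} = {a, b}) contribute 2 P^2 - T, and each of the other
   Lambda_2(Sigma) - 2|Sigma|^2 + |Sigma| terms is at most (|E| P / n)^2, by the
   bound n |f^|^2 <= |E| P.  Symmetrically n T <= (|Sigma| P / n)^2 Lambda_2(E).
   With Cauchy-Schwarz (P^2 <= |E| F, P^2 <= |Sigma| T) and n <= |E| |Sigma|
   these combine to n^3 <= |E|^3 X, where X is the expression under the first
   cube root.  The second inequality is the first one for the pair (f^, f),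
   which is a Fourier pair for the conjugate characters. *)

Lemma sqr_sum_le_card (C : numDomainType) (I : finType) (A : pred I) (a : I -> C) :
  (forall i, 0 <= a i) -> (\sum_(i in A) a i) ^+ 2 <= #|A|%:R * \sum_(i in A) a i ^+ 2.
Proof.
move=> a_ge0; set S := \sum_(i in A) a i; set m : C := #|A|%:R.
have S_ge0 : 0 <= S by exact: sumr_ge0.
have var_ge0 : 0 <= \sum_(i in A) (a i * m - S) ^+ 2.
  by apply: sumr_ge0 => i _; rewrite -realEsqr rpredB ?rpredM ?ger0_real.
have varE : \sum_(i in A) (a i * m - S) ^+ 2 = m * (m * \sum_(i in A) a i ^+ 2 - S ^+ 2).
  under eq_bigr do rewrite sqrrB exprMn.
  rewrite !big_split sumrN /= sumr_const sumrMnl -!mulr_suml -/S.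
  rewrite -[_ *+ 2]mulr_natr -[_ *+ #|A|]mulr_natr -/m; ring.
have [A0|A_gt0] := posnP #|A|.
  suff -> : S = 0 by rewrite expr0n mulr_ge0 ?ler0n ?sumr_ge0 // => i _; rewrite exprn_ge0.
  by rewrite /S big_pred0 // => i; rewrite (card0_eq A0).
by move: var_ge0; rewrite varE pmulr_rge0 ?ltr0n // subr_ge0.
Qed.

Lemma sum_pred2 (V : zmodType) (I : finType) (i j : I) (F : I -> V) :
  \sum_(k | (k == i) || (k == j)) F k = F i + F j *+ (j != i).
Proof.
have [-> | ji] := eqVneq j i.
  by rewrite mulr0n addr0 (eq_bigl (fun k => k == i)) ?big_pred1_eq // => k; rewrite orbb.
rewrite (bigD1 i) ?eqxx //= mulr1n (eq_bigl (fun k => k == j)) ?big_pred1_eq // => k.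
by case: (eqVneq k i) => [->|_]; rewrite ?andbT // eq_sym (negbTE ji).
Qed.

Lemma sum_support (U W : nmodType) (I : finType) (G : I -> U) (F : I -> W) :
  (forall i, G i = 0 -> F i = 0) -> \sum_(i in [set i | G i != 0]) F i = \sum_i F i.
Proof.
move=> FG; rewrite big_mkcond; apply: eq_bigr => i _; rewrite inE.
by case: eqVneq => [/FG ->|].
Qed.

Lemma sum_normX_gt0 (C : numDomainType) (I : finType) (u : I -> C) k i :
  u i != 0 -> 0 < \sum_j `|u j| ^+ k.
Proof.
move=> ui; rewrite (bigD1 i) //= ltr_wpDr ?exprn_gt0 ?normr_gt0 //.
by apply: sumr_ge0 => j _; rewrite exprn_ge0.
Qed.

Lemma sqr_sum_norm2_le (C : numDomainType) (I : finType) (u : I -> C) :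
  (\sum_i `|u i| ^+ 2) ^+ 2 <= #|[set i | u i != 0]|%:R * \sum_i `|u i| ^+ 4.
Proof.
have supp_sum k : \sum_(i in [set i | u i != 0]) `|u i| ^+ k.+1 = \sum_i `|u i| ^+ k.+1.
  by rewrite sum_support // => i ->; rewrite normr0 expr0n.
rewrite -!supp_sum; under [X in _ <= _ * X]eq_bigr do rewrite -[4%N]/(2 * 2)%N exprM.
by apply: sqr_sum_le_card => i; rewrite exprn_ge0.
Qed.

(** * Additive quadruples *)

Section Quadruples.
Variables (C : numClosedFieldType) (V : finZmodType).

Definition additive_quad (q : (V * V) * (V * V)) : bool := q.1.1 + q.1.2 == q.2.1 + q.2.2.

Definition trivial_quad (q : (V * V) * (V * V)) : bool :=
  (q.2 == q.1) || (q.2 == (q.1.2, q.1.1)).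

Definition quad_prod (u : V -> C) (q : (V * V) * (V * V)) : C :=
  u q.1.1 * u q.1.2 * (u q.2.1)^* * (u q.2.2)^*.

Definition indicator (A : {set V}) (x : V) : C := (x \in A)%:R.

Definition add_energy (A : {set V}) : nat :=
  #|[set q : (V * V) * (V * V) | [&& q.1.1 \in A, q.1.2 \in A, q.2.1 \in A, q.2.2 \in A &
                                   q.1.1 + q.1.2 == q.2.1 + q.2.2]]|.

Lemma trivial_quad_additive q : trivial_quad q -> additive_quad q.
Proof. by case: q => [[a b] [c e]] /orP[] /eqP[-> ->]; rewrite /additive_quad //= addrC. Qed.

Lemma add_energyE (A : {set V}) :
  (add_energy A)%:R = \sum_(q | additive_quad q) quad_prod (indicator A) q.
Proof.
rewrite /add_energy -sum1_card natr_sum big_mkcond [RHS]big_mkcond /=.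
apply: eq_bigr => q _; rewrite inE /quad_prod /indicator !conjC_nat.
by case: (q.1.1 \in A); case: (q.1.2 \in A); case: (q.2.1 \in A); case: (q.2.2 \in A);
  rewrite /= ?(mul1r, mul0r) //; case: ifP.
Qed.

Lemma sum_trivial_quad (u : V -> C) :
  \sum_(q | trivial_quad q) quad_prod u q =
  2 * (\sum_x `|u x| ^+ 2) ^+ 2 - \sum_x `|u x| ^+ 4.
Proof.
pose w a b := `|u a| ^+ 2 * `|u b| ^+ 2.
have quad_diag a b : quad_prod u ((a, b), (a, b)) = w a b by rewrite /quad_prod /w !normCK; ring.
have quad_swap a b : quad_prod u ((a, b), (b, a)) = w a b by rewrite /quad_prod /w !normCK; ring.
have -> : \sum_(q | trivial_quad q) quad_prod u q =
    \sum_p \sum_(p' | (p' == p) || (p' == (p.2, p.1))) quad_prod u (p, p').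
  by rewrite pair_big_dep; apply: eq_big => [[p p']|[p p'] _].
transitivity (\sum_p (w p.1 p.2 *+ 2 - w p.1 p.2 *+ (p.1 == p.2))).
  apply: eq_bigr => -[a b] _; rewrite sum_pred2 /= quad_diag quad_swap xpair_eqE.
  by rewrite eq_sym andbb; case: (a == b); rewrite /= ?mulr0n ?mulr1n ?addr0 ?subr0 ?mulr2n ?addrK.
rewrite big_split sumrN sumrMnl -(pair_bigA _ w) -(pair_bigA _ (fun a b => w a b *+ (a == b))) /=.
have diag a : \sum_b w a b *+ (a == b) = `|u a| ^+ 4.
  rewrite (bigD1 a) //= eqxx big1 ?addr0 => [|b /negbTE]; last by rewrite eq_sym => ->.
  by rewrite /w -exprD.
under [X in _ - X]eq_bigr do rewrite diag.
by rewrite expr2 big_distrlr /= mulr_natl.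
Qed.

Lemma sum_quad_split (u : V -> C) :
  \sum_(q | additive_quad q) quad_prod u q =
  \sum_(q | trivial_quad q) quad_prod u q +
  \sum_(q | additive_quad q && ~~ trivial_quad q) quad_prod u q.
Proof.
rewrite (bigID trivial_quad) /=; congr (_ + _); apply: eq_bigl => q.
by apply/idP/idP => [/andP[]|tq] //; rewrite trivial_quad_additive.
Qed.

Lemma add_energy_nontrivial (A : {set V}) :
  \sum_(q | additive_quad q && ~~ trivial_quad q) quad_prod (indicator A) q =
  (add_energy A)%:R - (2 * #|A|%:R ^+ 2 - #|A|%:R).
Proof.
have normX_indicator k x : `|indicator A x| ^+ k.+1 = indicator A x.
  by rewrite /indicator; case: (x \in A); rewrite /= ?normr_nat ?expr1n ?expr0n.
have sum_normX k : \sum_x `|indicator A x| ^+ k.+1 = #|A|%:R.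
  under eq_bigr do rewrite normX_indicator.
  rewrite -sum1_card natr_sum [RHS]big_mkcond; apply: eq_bigr => x _.
  by rewrite /indicator; case: (x \in A).
by rewrite (add_energyE A) sum_quad_split sum_trivial_quad !sum_normX addrAC subrr add0r.
Qed.

Section BoundedFunction.
Variables (u : V -> C) (k b : C).
Hypotheses (k_ge0 : 0 <= k) (u_bound : forall x, k * `|u x| ^+ 2 <= b).

Lemma norm_quad_prod_le q :
  k ^+ 2 * `|quad_prod u q| <= b ^+ 2 * quad_prod (indicator [set x | u x != 0]) q.
Proof.
have kux_ge0 x : 0 <= k * `|u x| ^+ 2 by rewrite mulr_ge0 ?exprn_ge0.
have b_ge0 : 0 <= b by apply: le_trans (u_bound q.1.1).
case: q => [[x1 x2] [x3 x4]]; rewrite /quad_prod /indicator /= !inE !conjC_nat.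
have [->|nz1] := eqVneq (u x1) 0; first by rewrite !(mul0r, normr0, mulr0).
have [->|nz2] := eqVneq (u x2) 0; first by rewrite !(mul0r, mulr0, normr0).
have [->|nz3] := eqVneq (u x3) 0; first by rewrite !(mul0r, mulr0, conjC0, normr0).
have [->|nz4] := eqVneq (u x4) 0; first by rewrite !(mul0r, mulr0, conjC0, normr0).
rewrite !mulr1 -ler_sqr ?nnegrE ?mulr_ge0 ?exprn_ge0 //.
have -> : (k ^+ 2 * `|u x1 * u x2 * (u x3)^* * (u x4)^*|) ^+ 2 =
    (k * `|u x1| ^+ 2) * (k * `|u x2| ^+ 2) * ((k * `|u x3| ^+ 2) * (k * `|u x4| ^+ 2)).
  by rewrite !normrM !norm_conjC; ring.
have -> : (b ^+ 2) ^+ 2 = b * b * (b * b) by ring.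
by rewrite !ler_pM ?mulr_ge0.
Qed.

Lemma sum_quad_prod_le (P : pred ((V * V) * (V * V))) :
  k ^+ 2 * `|\sum_(q | P q) quad_prod u q| <=
  b ^+ 2 * \sum_(q | P q) quad_prod (indicator [set x | u x != 0]) q.
Proof.
apply: le_trans (ler_wpM2l (exprn_ge0 2 k_ge0) (ler_norm_sum _ _ _)) _.
by rewrite !mulr_sumr; apply: ler_sum => q _; exact: norm_quad_prod_le.
Qed.

End BoundedFunction.
End Quadruples.

(** * Fourier expansions over a finite abelian group *)

Section Expansion.
Variables (C : numClosedFieldType) (V : finZmodType) (n : nat) (chi : V -> V -> C).
Variables (c : C) (G H : V -> C).
Hypotheses (c_ge0 : 0 <= c) (H_expand : forall x, H x = c * \sum_m G m * chi m x).

Lemma parseval : (forall m, G m = c * \sum_x H x * (chi m x)^*) ->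
  \sum_m `|G m| ^+ 2 = \sum_x `|H x| ^+ 2.
Proof.
move=> G_expand.
have conjH x : (H x)^* = c * \sum_m (G m)^* * (chi m x)^*.
  rewrite H_expand rmorphM rmorph_sum /= geC0_conj //; congr (_ * _).
  by apply: eq_bigr => m _; rewrite rmorphM.
transitivity (\sum_m \sum_x H x * ((G m)^* * (c * (chi m x)^*))).
  apply: eq_bigr => m _; rewrite normCK {1}G_expand mulr_sumr mulr_suml.
  by apply: eq_bigr => x _; ring.
rewrite exchange_big; apply: eq_bigr => x _ /=.
rewrite -mulr_sumr normCK conjH [in RHS]mulr_sumr; congr (_ * _).
by apply: eq_bigr => m _; rewrite mulrCA.
Qed.

Hypothesis c_sqr : c ^+ 2 * n%:R = 1.

Lemma sup_bound : (forall m x, `|chi m x| = 1) ->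
  forall x, n%:R * `|H x| ^+ 2 <= #|[set m | G m != 0]|%:R * \sum_m `|G m| ^+ 2.
Proof.
move=> chi_norm x; set S := [set m | G m != 0].
have Hx_le : `|H x| <= c * \sum_(m in S) `|G m|.
  rewrite H_expand normrM ger0_norm // ler_wpM2l // sum_support => [|m ->]; last by rewrite normr0.
  by apply: le_trans (ler_norm_sum _ _ _) _; apply: ler_sum => m _; rewrite normrM chi_norm mulr1.
apply: le_trans (_ : n%:R * (c * \sum_(m in S) `|G m|) ^+ 2 <= _).
  by rewrite ler_wpM2l // ler_sqr // nnegrE mulr_ge0 ?sumr_ge0.
rewrite exprMn mulrA [n%:R * _]mulrC c_sqr mul1r.
rewrite -(sum_support (G := G) (F := fun m => `|G m| ^+ 2)) => [|m ->]; last first.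
  by rewrite normr0 expr0n.
exact: sqr_sum_le_card.
Qed.

Lemma sqr_expansion : (forall a b x, chi (a + b) x = chi a x * chi b x) ->
  forall x, H x ^+ 2 = c ^+ 2 * \sum_(p : V * V) G p.1 * G p.2 * chi (p.1 + p.2) x.
Proof.
move=> chiD x; rewrite H_expand exprMn [X in _ * X]expr2 big_distrlr pair_bigA /=.
by congr (_ * _); apply: eq_bigr => p _; rewrite chiD; ring.
Qed.

Lemma fourth_moment : (forall a b x, chi (a + b) x = chi a x * chi b x) ->
  (forall k l, \sum_x chi k x * (chi l x)^* = n%:R * (k == l)%:R) ->
  n%:R * \sum_x `|H x| ^+ 4 = \sum_(q | additive_quad q) quad_prod G q.
Proof.
move=> chiD chi_orth.
have norm4 (z : C) : `|z| ^+ 4 = z ^+ 2 * (z ^+ 2)^* by rewrite -normCK normrX -exprM.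
have normX4 x : `|H x| ^+ 4 = c ^+ 4 * \sum_p \sum_p' quad_prod G (p, p') *
    (chi (p.1 + p.2) x * (chi (p'.1 + p'.2) x)^*).
  rewrite norm4 sqr_expansion // rmorphM /= (geC0_conj (exprn_ge0 2 c_ge0)) rmorph_sum.
  rewrite mulrACA -exprD big_distrlr; congr (_ * _).
  by apply: eq_bigr => p _; apply: eq_bigr => p' _; rewrite !rmorphM /quad_prod /=; ring.
under eq_bigr do rewrite normX4.
rewrite -mulr_sumr exchange_big; under eq_bigr do rewrite exchange_big.
(* Orthogonality keeps exactly the additive quadruples. *)
under eq_bigr do under eq_bigr do rewrite -mulr_sumr chi_orth.
transitivity ((c ^+ 2 * n%:R) ^+ 2 * \sum_(q | additive_quad q) quad_prod G q).
  rewrite pair_bigA [in RHS]big_mkcond !mulr_sumr; apply: eq_bigr => q _.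
  by rewrite /additive_quad; case: (_ == _); rewrite /= ?mulr0 ?mulr1; ring.
by rewrite c_sqr expr1n mul1r.
Qed.

End Expansion.

Section Pairings.
Variables (C : numClosedFieldType) (V : finZmodType).

Definition orthogonal_bicharacter (n : nat) (chi : V -> V -> C) : Prop :=
  [/\ forall a b x, chi (a + b) x = chi a x * chi b x,
      forall m x, chi m x = chi x m,
      forall m x, `|chi m x| = 1 &
      forall k l, \sum_x chi k x * (chi l x)^* = n%:R * (k == l)%:R].

Definition fourier_pair (chi : V -> V -> C) (c : C) (f g : V -> C) : Prop :=
  (forall x, f x = c * \sum_m g m * chi m x) /\ (forall m, g m = c * \sum_x f x * (chi m x)^*).

Variables (n : nat) (chi : V -> V -> C).
Hypothesis chiP : orthogonal_bicharacter n chi.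

Lemma orthogonal_bicharacter_conj : orthogonal_bicharacter n (fun m x => (chi m x)^*).
Proof.
have [chiD chiC chi_norm chi_orth] := chiP; split=> [a b x|m x|m x|k l].
- by rewrite chiD rmorphM.
- by rewrite chiC.
- by rewrite norm_conjC.
transitivity ((\sum_x chi k x * (chi l x)^*)^*); last by rewrite chi_orth rmorphM /= !conjC_nat.
by rewrite rmorph_sum; apply: eq_bigr => x _; rewrite rmorphM.
Qed.

Lemma fourier_pairC (c : C) (f g : V -> C) :
  fourier_pair chi c f g -> fourier_pair (fun m x => (chi m x)^*) c g f.
Proof.
have [_ chiC _ _] := chiP; case=> f_expand g_expand; split=> [m|x].
  by rewrite g_expand; congr (_ * _); apply: eq_bigr => x _; rewrite chiC.
by rewrite f_expand; congr (_ * _); apply: eq_bigr => m _; rewrite conjCK chiC.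
Qed.

Lemma fourier_inversion (c : C) (f g : V -> C) : c ^+ 2 * n%:R = 1 ->
  (forall m, g m = c * \sum_x f x * (chi m x)^*) -> fourier_pair chi c f g.
Proof.
have [_ chiC _ chi_orth] := chiP; move=> c_sqr g_expand; split=> // x.
transitivity (c ^+ 2 * \sum_y f y * \sum_m chi x m * (chi y m)^*).
  rewrite (bigD1 x) //= chi_orth eqxx big1 ?addr0 => [|y /negbTE yx]; last first.
    by rewrite chi_orth eq_sym yx !mulr0.
  by rewrite mulr1 mulrCA c_sqr mulr1.
rewrite exprS -mulrA; congr (_ * _).
under [RHS]eq_bigr do rewrite g_expand -mulrA mulr_suml.
rewrite -mulr_sumr exchange_big /=; congr (_ * _); apply: eq_bigr => y _.
by rewrite mulr_sumr; apply: eq_bigr => m _; rewrite !(chiC m); ring.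
Qed.

End Pairings.

Section FourierPair.
Variables (C : numClosedFieldType) (V : finZmodType) (n : nat) (chi : V -> V -> C).
Variables (c : C) (f g : V -> C).
Hypotheses (chiP : orthogonal_bicharacter n chi) (c_ge0 : 0 <= c) (c_sqr : c ^+ 2 * n%:R = 1)
           (fgP : fourier_pair chi c f g).

Local Notation P := (\sum_x `|f x| ^+ 2).
Local Notation E := [set x | f x != 0].
Local Notation S := [set m | g m != 0].
Local Notation e := (#|E|%:R : C).
Local Notation s := (#|S|%:R : C).

Lemma parseval_pair : \sum_m `|g m| ^+ 2 = P.
Proof. by case: fgP => f_expand g_expand; exact: parseval c_ge0 f_expand g_expand. Qed.

Lemma fourier_pair_neq0 : (exists x, f x != 0) -> exists m, g m != 0.
Proof.
move=> [x /(sum_normX_gt0 2)]; rewrite -parseval_pair.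
case: (boolP [exists m, g m != 0]) => [/existsP //|/existsPn g0].
by rewrite big1 ?ltxx // => m _; move/negPn: (g0 m) => /eqP ->; rewrite normr0 expr0n.
Qed.

Lemma sup_bound_f x : n%:R * `|f x| ^+ 2 <= s * P.
Proof.
have [f_expand _] := fgP; have [_ _ chi_norm _] := chiP.
by rewrite -parseval_pair; exact: sup_bound c_ge0 f_expand c_sqr chi_norm x.
Qed.

Lemma sup_bound_g m : n%:R * `|g m| ^+ 2 <= e * P.
Proof.
have [g_expand _] := fourier_pairC chiP fgP.
have [_ _ conj_chi_norm _] := orthogonal_bicharacter_conj chiP.
exact: sup_bound c_ge0 g_expand c_sqr conj_chi_norm m.
Qed.

Lemma uncertainty_principle :
  (exists x, f x != 0) -> (n <= #|E| * #|S|)%N.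
Proof.
move=> [x0 /(sum_normX_gt0 2) P_gt0].
rewrite -(ler_nat C) natrM -(ler_pM2r P_gt0) -{1}parseval_pair mulr_sumr.
rewrite -(sum_support (G := g)) => [|m ->]; last by rewrite normr0 expr0n mulr0.
apply: le_trans (_ : \sum_(m in S) e * P <= _).
  by apply: ler_sum => m _; exact: sup_bound_g.
by rewrite sumr_const -[_ *+ #|S|]mulr_natr -mulrA [P * _]mulrC mulrA.
Qed.

Local Notation F4 := (\sum_x `|f x| ^+ 4).
Local Notation T := (\sum_m `|g m| ^+ 4).

Lemma fourth_moment_f_le :
  n%:R ^+ 3 * F4 <=
  n%:R ^+ 2 * (2 * P ^+ 2 - T) + (e * P) ^+ 2 * ((add_energy S)%:R - (2 * s ^+ 2 - s)).
Proof.
have [f_expand _] := fgP; have [chiD _ _ chi_orth] := chiP.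
(* The trivial quadruples contribute [2 P^2 - T]; the others are bounded
   through [sup_bound_g]. *)
have := fourth_moment c_ge0 f_expand c_sqr chiD chi_orth.
rewrite sum_quad_split sum_trivial_quad parseval_pair.
set X := \sum_(q | additive_quad q && ~~ trivial_quad q) _ => nF4.
have X_le := sum_quad_prod_le (ler0n C n) sup_bound_g
  (fun q => additive_quad q && ~~ trivial_quad q).
rewrite add_energy_nontrivial -/X in X_le.
rewrite exprSr -mulrA nF4 mulrDr lerD2l (le_trans _ X_le) // ler_wpM2l ?exprn_ge0 ?ler0n //.
have -> : X = n%:R * F4 - (2 * P ^+ 2 - T) by rewrite nF4 addrC addKr.
have sum_real (u : V -> C) k : \sum_x `|u x| ^+ k \is Num.real.
  by apply/ger0_real/sumr_ge0 => x _; exact: exprn_ge0.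
by rewrite real_ler_norm // !rpredB ?rpredM ?rpredX ?rpred_nat ?sum_real.
Qed.

Lemma fourth_moment_g_le : n%:R ^+ 3 * T <= (s * P) ^+ 2 * (add_energy E)%:R.
Proof.
have [g_expand _] := fourier_pairC chiP fgP.
have [conj_chiD _ _ conj_chi_orth] := orthogonal_bicharacter_conj chiP.
have := sum_quad_prod_le (ler0n C n) sup_bound_f (fun q => additive_quad q).
rewrite -add_energyE -(fourth_moment c_ge0 g_expand c_sqr conj_chiD conj_chi_orth) => T_le.
have nT_ge0 : 0 <= n%:R * T by rewrite mulr_ge0 ?sumr_ge0 // => m _; rewrite exprn_ge0.
by rewrite exprSr -mulrA -[n%:R * T]ger0_norm.
Qed.

End FourierPair.

(** * From the moment inequalities to the cube root *)

Lemma fourth_moment_gap (R : realFieldType) (n s P T LE : R) :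
  0 <= n -> 1 <= s -> T <= P ^+ 2 -> P ^+ 2 <= s * T -> n ^+ 3 * T <= (s * P) ^+ 2 * LE ->
  n ^+ 3 * (P ^+ 2 - T) ^+ 2 <= s * (s - 1) ^+ 2 * LE * P ^+ 4.
Proof.
move=> n_ge0 s_ge1 T_le P_le nT_le.
have s_gt0 : 0 < s by apply: lt_le_trans s_ge1.
have key : s * (P ^+ 2 - T) ^+ 2 <= (s - 1) ^+ 2 * T * P ^+ 2.
  rewrite -subr_ge0.
  have -> : (s - 1) ^+ 2 * T * P ^+ 2 - s * (P ^+ 2 - T) ^+ 2 = (s * T - P ^+ 2) * (s * P ^+ 2 - T).
    by ring.
  by rewrite mulr_ge0 ?subr_ge0 // (le_trans T_le) // ler_peMl ?sqr_ge0.
rewrite -(ler_pM2l s_gt0) mulrCA.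
have -> : s * (s * (s - 1) ^+ 2 * LE * P ^+ 4) = (s - 1) ^+ 2 * P ^+ 2 * ((s * P) ^+ 2 * LE).
  by ring.
apply: le_trans (ler_wpM2l (exprn_ge0 3 n_ge0) key) _.
have -> : n ^+ 3 * ((s - 1) ^+ 2 * T * P ^+ 2) = (s - 1) ^+ 2 * P ^+ 2 * (n ^+ 3 * T) by ring.
by apply: ler_wpM2l nT_le; rewrite mulr_ge0 ?sqr_ge0.
Qed.

Lemma cbrt_ge (R : realType) (x y : R) : 0 <= y -> y ^+ 3 <= x -> y <= cbrt x.
Proof.
move=> y_ge0 yx; have x_ge0 : 0 <= x by apply: le_trans yx; rewrite exprn_ge0.
rewrite /cbrt x_ge0.
have -> : y = (y ^+ 3) `^ 3%:R^-1 by rewrite -powR_mulrn // -powRrM mulfV ?pnatr_eq0 // powRr1.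
by apply: ge0_ler_powR; rewrite ?invr_ge0 ?ler0n // nnegrE exprn_ge0.
Qed.

Lemma le_mul_cbrt (R : realType) (n e x : R) :
  0 <= n -> 0 < e -> n ^+ 3 <= e ^+ 3 * x -> n <= e * cbrt x.
Proof.
move=> n_ge0 e_gt0 nx.
rewrite -ler_pdivrMl //; apply: cbrt_ge; first by rewrite mulr_ge0 ?invr_ge0 ?(ltW e_gt0).
by rewrite exprMn exprVn ler_pdivrMl ?exprn_gt0.
Qed.

Section CubeBound.
Variables (R : realType) (n e s P T F4 LS LE : R).
Hypotheses (n_gt0 : 0 < n) (e_gt0 : 0 < e) (s_ge1 : 1 <= s) (P_gt0 : 0 < P) (LE_ge0 : 0 <= LE).
Hypotheses (P_le_F4 : P ^+ 2 <= e * F4) (P_le_T : P ^+ 2 <= s * T) (n_le_es : n <= e * s).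
Hypotheses (F4_le : n ^+ 3 * F4 <=
                     n ^+ 2 * (2 * P ^+ 2 - T) + (e * P) ^+ 2 * (LS - (2 * s ^+ 2 - s)))
           (T_le : n ^+ 3 * T <= (s * P) ^+ 2 * LE).

Let s_gt0 : 0 < s. Proof. exact: lt_le_trans s_ge1. Qed.
Let n_ge0 := ltW n_gt0.
Let e_ge0 := ltW e_gt0.
Let s_ge0 := ltW s_gt0.
Let P_ge0 := ltW P_gt0.

Local Notation Z := (Num.sqrt (n / (e * s)) * Num.sqrt (LE / e ^+ 3)).

Let Z_ge0 : 0 <= Z. Proof. by rewrite mulr_ge0 ?sqrtr_ge0. Qed.

Let Z_sqr : Z ^+ 2 * (s * e ^+ 4) = n * LE.
Proof.
rewrite exprMn !sqr_sqrtr ?divr_ge0 ?mulr_ge0 ?exprn_ge0 //.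
by field; rewrite !gt_eqF.
Qed.

Lemma gap_term_le : e * n ^+ 2 * (P ^+ 2 - T) <= e ^+ 3 * s * (s - 1) * Z * P ^+ 2.
Proof.
have rhs_ge0 : 0 <= e ^+ 3 * s * (s - 1) * Z * P ^+ 2.
  by rewrite !mulr_ge0 ?exprn_ge0 ?subr_ge0 ?sqrtr_ge0.
have [PT|TP] := lerP (P ^+ 2) T.
  by apply: le_trans rhs_ge0; rewrite mulr_ge0_le0 ?mulr_ge0 ?exprn_ge0 ?subr_le0.
rewrite -ler_sqr ?nnegrE ?mulr_ge0 ?exprn_ge0 ?subr_ge0 ?sqrtr_ge0 ?(ltW TP) //.
have gap := fourth_moment_gap n_ge0 s_ge1 (ltW TP) P_le_T T_le.
have -> : (e * n ^+ 2 * (P ^+ 2 - T)) ^+ 2 = e ^+ 2 * n * (n ^+ 3 * (P ^+ 2 - T) ^+ 2) by ring.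
have -> : (e ^+ 3 * s * (s - 1) * Z * P ^+ 2) ^+ 2 =
    e ^+ 2 * s * (s - 1) ^+ 2 * P ^+ 4 * (Z ^+ 2 * (s * e ^+ 4)) by ring.
rewrite Z_sqr.
have -> : e ^+ 2 * s * (s - 1) ^+ 2 * P ^+ 4 * (n * LE) =
    e ^+ 2 * n * (s * (s - 1) ^+ 2 * LE * P ^+ 4) by ring.
by apply: ler_wpM2l gap; rewrite mulr_ge0 ?exprn_ge0.
Qed.

Lemma cube_bound :
  n ^+ 3 <= e ^+ 3 * (LS - (2 * s ^+ 2 - s)) + e ^+ 2 * n * s + e ^+ 3 * s * (s - 1) * Z.
Proof.
rewrite -(ler_pM2r (exprn_gt0 2 P_gt0)).
apply: le_trans (ler_wpM2l (exprn_ge0 3 n_ge0) P_le_F4) _.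
rewrite mulrCA; apply: le_trans (ler_wpM2l e_ge0 F4_le) _.
have es_le : e * n ^+ 2 * P ^+ 2 <= e ^+ 2 * n * s * P ^+ 2.
  have -> : e * n ^+ 2 * P ^+ 2 = e * n * P ^+ 2 * n by ring.
  have -> : e ^+ 2 * n * s * P ^+ 2 = e * n * P ^+ 2 * (e * s) by ring.
  by rewrite ler_wpM2l ?mulr_ge0 ?exprn_ge0.
have := lerD es_le gap_term_le.
lra.
Qed.

Lemma cbrt_uncertainty_bound :
  n <= e * cbrt (LS - s ^+ 2 * (1 - n / (e * s)) - s * (s - 1) * (1 - Z)).
Proof.
apply: le_mul_cbrt n_ge0 e_gt0 _.
rewrite (_ : e ^+ 3 * _ = e ^+ 3 * (LS - (2 * s ^+ 2 - s)) + e ^+ 2 * n * s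
                         + e ^+ 3 * s * (s - 1) * Z); first exact: cube_bound.
by field; rewrite !gt_eqF.
Qed.

End CubeBound.

Section RealFourierPair.
Variables (R : realType) (V : finZmodType) (n : nat) (chi : V -> V -> R[i]).
Variables (c : R[i]) (f g : V -> R[i]).
Hypotheses (chiP : orthogonal_bicharacter n chi) (c_ge0 : 0 <= c) (c_sqr : c ^+ 2 * n%:R = 1)
           (fgP : fourier_pair chi c f g).

Local Notation E := [set x | f x != 0].
Local Notation S := [set m | g m != 0].

Local Notation e := (#|E|%:R : R).
Local Notation s := (#|S|%:R : R).
Local Notation LE := ((add_energy E)%:R : R).
Local Notation LS := ((add_energy S)%:R : R).

Lemma energy_uncertainty : (exists x, f x != 0) ->
  n%:R <= e * cbrt (LS - s ^+ 2 * (1 - n%:R / (e * s))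
                   - s * (s - 1) * (1 - Num.sqrt (n%:R / (e * s)) * Num.sqrt (LE / e ^+ 3))).
Proof.
move=> f_neq0.
have n_gt0 : (0 < n)%N.
  by rewrite lt0n; apply: contra_eq_neq c_sqr => ->; rewrite mulr0 eq_sym oner_neq0.
have nES := uncertainty_principle chiP c_ge0 c_sqr fgP f_neq0.
have /andP[E_gt0 S_gt0] : (0 < #|E|)%N && (0 < #|S|)%N.
  by rewrite -muln_gt0 (leq_trans n_gt0 nES).
(* The sums of moduli are nonnegative reals, so the inequalities descend to R. *)
have real_sum (u : V -> R[i]) k : exists r : R, \sum_x `|u x| ^+ k = (r%:C)%C.
  by apply/complex_realP/ger0_real/sumr_ge0 => x _; rewrite exprn_ge0.
have [p Pp] := real_sum f 2%N; have [q F4q] := real_sum f 4%N; have [t Tt] := real_sum g 4%N.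
have p_gt0 : 0 < p by have [x /(sum_normX_gt0 2)] := f_neq0; rewrite Pp ltcR.
have P_le_F4 := sqr_sum_norm2_le f; rewrite Pp F4q in P_le_F4.
have P_le_T := sqr_sum_norm2_le g; rewrite (parseval_pair c_ge0 fgP) Pp Tt in P_le_T.
have F4_le := fourth_moment_f_le chiP c_ge0 c_sqr fgP.
rewrite Pp F4q Tt in F4_le.
have T_le := fourth_moment_g_le chiP c_ge0 c_sqr fgP.
rewrite Pp Tt in T_le.
apply: (cbrt_uncertainty_bound (P := p) (T := t) (F4 := q)) => //;
  rewrite ?ltr0n ?ler1n ?ler0n -?natrM ?ler_nat //.
all: by rewrite -lecR !(rmorphXn, rmorphD, rmorphN, rmorphB, rmorphM, rmorph_nat, rmorph1).
Qed.

End RealFourierPair.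

(** * Characters of Z_N^d *)

Section Expi.
Variable R : realType.
Implicit Types t u : R.

Lemma expi0 : expi (0 : R) = 1.
Proof. by rewrite /expi cos0 sin0. Qed.

Lemma expiD t u : expi (t + u) = expi t * expi u.
Proof. by rewrite /expi cosD sinD; simpc; congr (_ +i* _)%C; ring. Qed.

Lemma expiN t : expi (- t) = (expi t)^*.
Proof. by rewrite /expi cosN sinN. Qed.

Lemma expiMn t k : expi (t *+ k) = expi t ^+ k.
Proof. by elim: k => [|k IHk]; rewrite ?expi0 // mulrS expiD IHk exprS. Qed.

Lemma norm_expi t : `|expi t| = 1.
Proof. by rewrite normc_def /= cos2Dsin2 sqrtr1. Qed.

Lemma expi_neq1 t : 0 < t < pi *+ 2 -> expi t != 1.
Proof.
move=> /andP[t_gt0 t_lt2pi]; have : 0 < sin (t / 2).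
  by apply: sin_gt0_pi; rewrite divr_gt0 //= ltr_pdivrMr // mulr_natr.
apply: contraTneq => /(congr1 (@complex.Re R)) /= cos_t.
move: cos_t; rewrite [t in cos t]splitr cosD; have := cos2Dsin2 (t / 2).
rewrite -!expr2 => sqr_sum sqr_diff.
have /eqP : sin (t / 2) ^+ 2 = 0 by lra.
by rewrite sqrf_eq0 => /eqP ->; rewrite ltxx.
Qed.
End Expi.

Section CharactersZp.
Variables (R : realType) (N d : nat).
Hypothesis N_gt1 : (1 < N)%N.

Definition zeta : R[i] := expi (2 * pi / N%:R).

Definition zchar (m x : 'rV['Z_N]_d) : R[i] := zeta ^+ dotZ m x.

Definition dft_scale : R[i] := ((Num.sqrt (N%:R : R)) ^- d)%:C%C.

Let N_gt0 : (0 < N)%N. Proof. exact: ltnW. Qed.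
Let N_neq0 : (N%:R : R) != 0. Proof. by rewrite pnatr_eq0 -lt0n. Qed.

Let ltn_Zp (a : 'Z_N) : (a < N)%N.
Proof. by move: (nat_of_ord a) (ltn_ord a) => k; rewrite Zp_cast. Qed.

Lemma zeta_expn k : zeta ^+ k = expi (2 * pi * k%:R / N%:R).
Proof. by rewrite /zeta -expiMn -[_ *+ k]mulr_natr mulrAC. Qed.

Lemma zetaN : zeta ^+ N = 1.
Proof. by rewrite zeta_expn mulfK // mulr_natl /expi cos2pi sin2pi. Qed.

Lemma zeta_neq1 k : (0 < k < N)%N -> zeta ^+ k != 1.
Proof.
move=> /andP[k_gt0 k_ltN]; rewrite zeta_expn; apply: expi_neq1.
have -> : 2 * pi * k%:R / N%:R = pi *+ 2 * (k%:R / N%:R) :> R by rewrite -[pi *+ 2]mulr_natl !mulrA.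
have twopi_gt0 : 0 < pi *+ 2 :> R by rewrite pmulrn_rgt0 ?pi_gt0.
rewrite mulr_gt0 ?divr_gt0 ?ltr0n //= gtr_pMr // ltr_pdivrMr ?ltr0n //.
by rewrite mul1r ltr_nat.
Qed.

Lemma zeta_modn a b : a = b %[mod N] -> zeta ^+ a = zeta ^+ b.
Proof. by move=> ab; rewrite -(expr_mod a zetaN) ab expr_mod // zetaN. Qed.

Lemma dotZC (m x : 'rV['Z_N]_d) : dotZ m x = dotZ x m.
Proof. by apply: eq_bigr => i _; rewrite mulnC. Qed.

Lemma dotZD (m m' x : 'rV['Z_N]_d) : dotZ (m + m') x = dotZ m x + dotZ m' x %[mod N].
Proof.
rewrite /dotZ -big_split /= -modn_summ -[RHS]modn_summ; congr (_ %% N)%N.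
apply: eq_bigr => i _; rewrite mxE /=.
move: (m ord0 i : nat) (m' ord0 i : nat) (x ord0 i : nat) => a b c.
by rewrite Zp_cast // modnMml mulnDl.
Qed.

Lemma zcharD m m' x : zchar (m + m') x = zchar m x * zchar m' x.
Proof. by rewrite /zchar -exprD; apply/zeta_modn/dotZD. Qed.

Lemma zcharC m x : zchar m x = zchar x m.
Proof. by rewrite /zchar dotZC. Qed.

Lemma norm_zchar m x : `|zchar m x| = 1.
Proof. by rewrite normrX norm_expi expr1n. Qed.

Lemma zchar0 x : zchar 0 x = 1.
Proof. by rewrite /zchar /dotZ big1 // => i _; rewrite mxE mul0n. Qed.

Lemma conj_zchar m x : (zchar m x)^* = zchar (- m) x.
Proof.
have zchar_neq0 : zchar m x != 0 by rewrite -normr_eq0 norm_zchar oner_neq0.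
by apply: (mulIf zchar_neq0); rewrite -normCKC norm_zchar expr1n -zcharD addNr zchar0.
Qed.

Lemma sum_zchar k : \sum_x zchar k x = (N ^ d)%:R * (k == 0)%:R.
Proof.
have [->|k_neq0] := eqVneq k 0.
  under eq_bigr do rewrite zchar0.
  by rewrite sumr_const card_mx card_ord Zp_cast // mul1n mulr1.
have [i ki] : exists i, k ord0 i != 0.
  apply/existsP; apply: contraNT k_neq0 => /existsPn k0; apply/eqP/rowP => i.
  by rewrite mxE; apply/eqP; move/negPn: (k0 i).
(* Translating by [y] multiplies the sum by [zchar k y], which is not 1. *)
pose y : 'rV['Z_N]_d := delta_mx 0 i.
have zchar_y : zchar k y != 1.
  have -> : zchar k y = zeta ^+ k ord0 i.
    rewrite /zchar /dotZ (bigD1 i) //= big1 => [|j ji]; last by rewrite mxE (negbTE ji) muln0.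
    by rewrite mxE !eqxx /= modn_small ?muln1 ?addn0.
  by apply: zeta_neq1; rewrite lt0n ki ltn_Zp.
have shift : \sum_x zchar k x = zchar k y * \sum_x zchar k x.
  rewrite [LHS](reindex_inj (addrI y)) mulr_sumr; apply: eq_bigr => x _.
  by rewrite !(zcharC k) zcharD.
rewrite mulr0; apply/eqP; have : (1 - zchar k y) * \sum_x zchar k x = 0.
  by rewrite mulrBl mul1r -shift subrr.
by move/eqP; rewrite mulf_eq0 subr_eq0 eq_sym (negbTE zchar_y).
Qed.

Lemma zchar_orthogonal : orthogonal_bicharacter (N ^ d) zchar.
Proof.
split=> [m m' x|m x|m x|k l]; [exact: zcharD|exact: zcharC|exact: norm_zchar|].
by under eq_bigr do rewrite conj_zchar -zcharD; rewrite sum_zchar subr_eq0.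
Qed.

Lemma dft_scale_ge0 : 0 <= dft_scale.
Proof. by rewrite ler0c invr_ge0 exprn_ge0 ?sqrtr_ge0. Qed.

Lemma dft_scale_sqr : dft_scale ^+ 2 * (N ^ d)%:R = 1.
Proof.
rewrite -(rmorph_nat (real_complex R)) -rmorphXn -rmorphM /= -exprVn -exprM mulnC exprM.
by rewrite exprVn sqr_sqrtr ?ler0n // natrX -exprMn mulVf // expr1n.
Qed.

Lemma dft_fourier_pair (f : 'rV['Z_N]_d -> R[i]) : fourier_pair zchar dft_scale f (dft f).
Proof.
apply: (fourier_inversion zchar_orthogonal dft_scale_sqr) => m.
by rewrite /dft; congr (_ * _); apply: eq_bigr => x _; rewrite /zchar zeta_expn -expiN.
Qed.

End CharactersZp.

Theorem mainTheorem1 (R : realType) (N d : nat) (f : 'rV['Z_N]_d -> R[i]) :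
  (2 <= N)%N -> (1 <= d)%N -> (exists x, f x != 0) ->
  let E := supp f in
  let S := supp (dft f) in
  let Nd : R := (N ^ d)%:R in
  let e : R := #|E|%:R in
  let s : R := #|S|%:R in
  let LE : R := (energy E)%:R in
  let LS : R := (energy S)%:R in
  Nd <= e * cbrt (LS - s ^+ 2 * (1 - Nd / (e * s))
                  - s * (s - 1) * (1 - Num.sqrt (Nd / (e * s)) * Num.sqrt (LE / e ^+ 3)))
  /\
  Nd <= s * cbrt (LE - e ^+ 2 * (1 - Nd / (e * s))
                  - e * (e - 1) * (1 - Num.sqrt (Nd / (e * s)) * Num.sqrt (LS / s ^+ 3))).
Proof.
move=> N_gt1 _ f_neq0 E S Nd e s LE LS.
have chiP := zchar_orthogonal R d N_gt1.
have fgP := dft_fourier_pair N_gt1 f.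
have c_ge0 := dft_scale_ge0 R N d.
have c_sqr := dft_scale_sqr R d N_gt1.
split; first exact: energy_uncertainty chiP c_ge0 c_sqr fgP f_neq0.
rewrite [e * s]mulrC.
exact: energy_uncertainty (orthogonal_bicharacter_conj chiP) c_ge0 c_sqr (fourier_pairC chiP fgP)
  (fourier_pair_neq0 c_ge0 fgP f_neq0).
Qed.
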